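(* Let $n\ge1$ and let $\mathcal{G}_n\subset GL_n(\mathbb{Z})$ be the group generated by the linear maps $\sigma_1,\dotsc,\sigma_n$ of $\mathbb{Z}^n$ which, in coordinates $x=(x_1,\dotsc,x_n)$, are \[ \sigma_1:\ x_{2i}\mapsto x_{2i}+x_1,\quad x_{2i-1}\mapsto x_{2i-1}\quad(\text{all admissible } i), \] \[ \sigma_i\ (2\le i\le n):\ x_{i-1}\mapsto x_{i-2}+x_{i-1}-x_i,\quad x_j\mapsto x_j\ (j\ne i-1), \] with the convention $x_0=0$. Let \[ J(x,y)=\sum_{i=1}^{n-1}\left(x_iy_{i+1}-x_{i+1}y_i\right). \] If $n$ is even, then $J$ is non-degenerate and $J(gx,gy)=J(x,y)$ for all $g\in\mathcal{G}_n$ and all $x,y$. If $n$ is odd, then $J(\sigma_ix,\sigma_iy)=J(x,y)$ for all $i\ge2$ and all $x,y$, and the kernel of $J$ (the set of $x$ with $J(x,y)=0$ for all $y$, as a form on $\mathbb{Q}^n$) is one-dimensional.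
   Context: These coordinates arise as follows: if $k=(k_1,\dotsc,k_n)$ and $x_i=k_i-k_{i-1}+k_{i-2}-\dotsb+(-1)^{i+1}k_1$ (equivalently $k_i=x_{i-1}+x_i$, $x_0=0$), then the maps above are the maps $\sigma_1: k_1\mapsto k_1,\ k_j\mapsto k_j+k_1\ (j>1)$ and, for $i\ge2$, $\sigma_i: k_{i-1}\mapsto 2k_{i-1}-k_i,\ k_i\mapsto k_{i-1},\ k_j\mapsto k_j\ (j\ne i-1,i)$. *)

From HB Require Import structures.
From mathcomp Require Import all_boot all_order all_algebra.
Set Implicit Arguments. Unset Strict Implicit. Unset Printing Implicit Defensive.
Import GRing.Theory Num.Theory.
Local Open Scope ring_scope.

(* Coordinates are 1-based in the paper: row/column index r : 'I_n stands
   for the coordinate x_(r+1).  Column vectors 'cV_n represent points of Z^n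
   (or Q^n), and a matrix M acts by x |-> M *m x. *)

(* The generator sigma_i of G_n, as an integer matrix (row p gives the new
   value of x_p in terms of the old coordinates x_q).  For i >= 2:
   x_(i-1) |-> x_(i-2) + x_(i-1) - x_i (with x_0 = 0, i.e. no column 0),
   other coordinates fixed. *)
Definition sigma (n i : nat) : 'M[int]_n :=
  \matrix_(r < n, c < n)
    let p := r.+1 in let q := c.+1 in
    if i == 1%N then
      (if ~~ odd p then (p == q)%:R + (q == 1%N)%:R else (p == q)%:R)
    else if p == i.-1 then (q == i.-2)%:R + (q == i.-1)%:R - (q == i)%:R
    else (p == q)%:R.

Inductive in_Gn (n : nat) : 'M[int]_n -> Prop :=
| Gn1 : in_Gn 1%:M
| GnM i g : (1 <= i <= n)%N -> in_Gn g -> in_Gn (sigma n i *m g)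
| GnV i g : (1 <= i <= n)%N -> in_Gn g -> in_Gn (invmx (sigma n i) *m g).

Definition JForm (R : nzRingType) (n : nat) (x y : 'cV[R]_n) : R :=
  \sum_(i < n) \sum_(j < n | j == i.+1 :> nat) (x i 0 * y j 0 - x j 0 * y i 0).

From HB Require Import structures.
From mathcomp Require Import all_boot all_order all_algebra.
From mathcomp Require Import ring.
Set Implicit Arguments. Unset Strict Implicit. Unset Printing Implicit Defensive.
Import GRing.Theory Num.Theory.
Local Open Scope ring_scope.

(* Write J(x,y) = x^T Ω y with Ω the alternating Gram matrix, Ω_ij = [j = i+1] - [i = j+1].
   For i >= 2 the generator σ_i is the symplectic transvection x |-> x + J(x,e) e along
   the basis vector e = e_(i-1), and for even n so is σ_1, along w = (0,1,0,1,...,0,1),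
   because then J(x,w) = x_1.  Every vector is isotropic for an alternating form, and a
   transvection along an isotropic vector preserves J and is invertible, so the whole
   group G_n preserves J.  The kernel of J is the kernel of Ω; as (Ωx)_i = x_(i+1) - x_(i-1),
   it forces x_2 = 0 and x_(i+2) = x_i, so x is a multiple of v = (1,0,1,0,...), and
   v lies in the kernel exactly when n is odd. *)

Section GramMatrix.
Variables (R : comNzRingType) (n : nat).
Implicit Types x y : 'cV[R]_n.

Definition gram : 'M[R]_n :=
  \matrix_(i, j) (((j : nat) == i.+1)%:R - ((i : nat) == j.+1)%:R).

Lemma tr_gram : gram^T = - gram.
Proof. by apply/matrixP=> i j; rewrite !mxE opprB. Qed.

Lemma JForm_gram x y : JForm x y = (x^T *m gram *m y) 0 0.
Proof.
pose S (f : 'I_n -> 'I_n -> R) := \sum_(i < n) \sum_(j < n) ((j : nat) == i.+1)%:R * f i j.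
have -> : JForm x y = S (fun i j => x i 0 * y j 0) - S (fun i j => x j 0 * y i 0).
  rewrite /S -sumrB; apply: eq_bigr => i _; rewrite -sumrB big_mkcond.
  by apply: eq_bigr => j _; case: eqP; rewrite /= ?mul1r ?mul0r ?subr0.
rewrite mxE [S (fun i j => _)]exchange_big -sumrB; apply: eq_bigr => j _.
rewrite mxE big_distrl -sumrB; apply: eq_bigr => i _.
by rewrite !mxE /=; ring.
Qed.

Lemma JFormxx x : JForm x x = 0.
Proof. by rewrite /JForm big1 // => i _; rewrite big1 // => j _; rewrite mulrC subrr. Qed.

Lemma gram_isotropic x : x^T *m gram *m x = 0.
Proof. by apply/matrixP=> i j; rewrite !ord1 -JForm_gram JFormxx mxE. Qed.

Lemma JForm_antisym x y : JForm x y = - JForm y x.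
Proof.
have trE (M : 'M[R]_1) : M 0 0 = M^T 0 0 by rewrite mxE.
by rewrite !JForm_gram trE !trmx_mul trmxK tr_gram mulNmx mulmxN mulmxA mxE.
Qed.

Lemma JForm_kernel x : (forall y, JForm x y = 0) <-> gram *m x = 0.
Proof.
have JdeltaE (i : 'I_n) : JForm (delta_mx i 0) x = (gram *m x) i 0.
  by rewrite JForm_gram -mulmxA trmx_delta -rowE mxE.
split=> [Kx | Gx y].
  by apply/matrixP=> i j; rewrite ord1 -JdeltaE JForm_antisym Kx oppr0 mxE.
by rewrite JForm_antisym JForm_gram -mulmxA Gx mulmx0 mxE oppr0.
Qed.

End GramMatrix.

Section FormIsometries.
Variables (R : comNzRingType) (n : nat) (A : 'M[R]_n).

Definition preserves_form (g : 'M[R]_n) := g^T *m A *m g = A.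

Lemma preserves_form1 : preserves_form 1%:M.
Proof. by rewrite /preserves_form trmx1 mul1mx mulmx1. Qed.

Lemma preserves_formM g h :
  preserves_form g -> preserves_form h -> preserves_form (g *m h).
Proof.
rewrite /preserves_form trmx_mul => Hg Hh.
by rewrite !mulmxA -(mulmxA h^T) -(mulmxA h^T) Hg.
Qed.

Hypothesis trA : A^T = - A.

Definition transvection (a : 'cV[R]_n) := 1%:M + a *m (A *m a)^T.

Lemma transvectionE a i j :
  transvection a i j = (i == j)%:R + a i 0 * (A *m a) j 0.
Proof. by rewrite 3!mxE big_ord1 mxE. Qed.

Lemma trmx_mulmx_isotropic (a : 'cV[R]_n) : a^T *m A *m a = 0 -> (A *m a)^T *m a = 0.
Proof. by move=> Aa0; rewrite trmx_mul trA mulmxN mulNmx Aa0 oppr0. Qed.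

Lemma transvection_preserves_form (a : 'cV[R]_n) :
  a^T *m A *m a = 0 -> preserves_form (transvection a).
Proof.
move=> Aa0; have aA : a^T *m A = - (A *m a)^T by rewrite trmx_mul trA mulmxN opprK.
rewrite /preserves_form /transvection (raddfD (@trmx R n n)) /= trmx1 trmx_mul trmxK.
rewrite mulmxDl mul1mx -!mulmxA aA !mulmxDr !mulmx1 mulmxA mulmxN mulmxBl.
by rewrite -!mulmxA (mulmxA (A *m a)^T) trmx_mulmx_isotropic // mul0mx !mulmx0 subr0 subrK.
Qed.

End FormIsometries.

Lemma preserves_formV (R : comUnitRingType) n (A g : 'M[R]_n) :
  g \in unitmx -> preserves_form A g -> preserves_form A (invmx g).
Proof.
rewrite /preserves_form => gU Hg.
by rewrite -{1}Hg !mulmxA -trmx_mul mulmxV // trmx1 mul1mx -mulmxA mulmxV ?mulmx1.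
Qed.

Lemma preserves_form_JForm (R : comNzRingType) n (g : 'M[R]_n) x y :
  preserves_form (gram R n) g -> JForm (g *m x) (g *m y) = JForm x y.
Proof.
rewrite /preserves_form !JForm_gram trmx_mul => Hg.
by rewrite !mulmxA -(mulmxA x^T) -(mulmxA x^T) Hg.
Qed.

Lemma transvection_unit (R : comUnitRingType) n (A : 'M[R]_n) a :
  A^T = - A -> a^T *m A *m a = 0 -> transvection A a \in unitmx.
Proof.
move=> trA Aa0; apply: (proj1 (mulmx1_unit (B := 1%:M - a *m (A *m a)^T) _)).
rewrite mulmxBr mulmx1 mulmxDl mul1mx -(mulmxA a) (mulmxA _ a).
rewrite trmx_mulmx_isotropic //.
by rewrite mul0mx mulmx0 addr0 addrK.
Qed.

Section GramKernel.
Variables (R : comNzRingType) (n : nat).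
Implicit Types x : 'cV[R]_n.

(* Coordinates out of range read as 0, so that [(gram *m x)_i = x_(i+1) - x_(i-1)]
   holds uniformly, including at both ends. *)
Definition nth_coord x (k : nat) : R := if insub k is Some i then x i 0 else 0.

Lemma nth_coord_ord x (i : 'I_n) : nth_coord x i = x i 0.
Proof. by rewrite /nth_coord valK. Qed.

Lemma sum_delta_coord x k :
  \sum_(j < n) ((j : nat) == k)%:R * x j 0 = nth_coord x k.
Proof.
rewrite /nth_coord; case: insubP => [i _ <-|kn].
  rewrite (bigD1 i) //= eqxx mul1r big1 ?addr0 // => j ji.
  by rewrite (inj_eq val_inj) (negbTE ji) mul0r.
rewrite big1 // => j _; case: eqP => [jk|]; last by rewrite mul0r.
by move: kn; rewrite -jk ltn_ord.
Qed.

Lemma gram_mulmxE x (i : 'I_n) :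
  (gram R n *m x) i 0 =
  nth_coord x i.+1 - (if val i is k.+1 then nth_coord x k else 0).
Proof.
rewrite mxE; under eq_bigr => j _ do rewrite mxE mulrBl.
rewrite sumrB sum_delta_coord; congr (_ - _).
case: i => -[|k] /= _; first by rewrite big1 // => j _; rewrite mul0r.
by rewrite -sum_delta_coord; apply: eq_bigr => j _; rewrite eqSS eq_sym.
Qed.

Lemma nth_coord_col (f : nat -> R) k :
  nth_coord (\col_(i < n) f i) k = if (k < n)%N then f k else 0.
Proof. by rewrite /nth_coord; case: insubP => [i -> <-|/negbTE->]; rewrite ?mxE. Qed.

(* In the paper's 1-based coordinates, [alt_even] is (1,0,1,0,...) and [alt_odd]
   is (0,1,0,1,...). *)
Definition alt_even : 'cV[R]_n := \col_(i < n) (~~ odd i)%:R.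
Definition alt_odd : 'cV[R]_n := \col_(i < n) (odd i)%:R.

Lemma gram_alt_even (i : 'I_n) :
  (gram R n *m alt_even) i 0 = - ((i.+1 == n) && ~~ odd n)%:R.
Proof.
rewrite gram_mulmxE /alt_even !(nth_coord_col (fun k => (~~ odd k)%:R)).
case: i => -[|k] /= kn; rewrite ?(nth_coord_col (fun k => (~~ odd k)%:R)).
  by rewrite subr0 if_same; case: eqP => [<-|_]; rewrite /= oppr0.
rewrite (ltnW kn) negbK; case: ltnP => kn'; first by rewrite (ltn_eqF kn') subrr oppr0.
have -> : n = k.+2 by apply/eqP; rewrite eqn_leq kn'.
by rewrite eqxx sub0r /= negbK.
Qed.

Lemma gram_alt_odd (i : 'I_n) :
  ~~ odd n -> (gram R n *m alt_odd) i 0 = ((i : nat) == 0%N)%:R.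
Proof.
move=> evn; rewrite gram_mulmxE /alt_odd !(nth_coord_col (fun k => (odd k)%:R)).
case: i => -[|k] /= kn; rewrite ?(nth_coord_col (fun k => (odd k)%:R)).
  have -> : (1 < n)%N by case: n kn evn => [|[|]].
  by rewrite subr0.
rewrite (ltnW kn) negbK; case: ltnP => kn'; first by rewrite subrr.
have nk : n = k.+2 by apply/eqP; rewrite eqn_leq kn'.
by move: evn; rewrite nk /= negbK => /negbTE->; rewrite subrr.
Qed.

Lemma gram_kernel x : gram R n *m x = 0 -> x = nth_coord x 0 *: alt_even.
Proof.
move=> Kx; have coordS (i : 'I_n) :
    nth_coord x i.+1 = if val i is k.+1 then nth_coord x k else 0.
  by apply/eqP; rewrite -subr_eq0 -gram_mulmxE Kx mxE.
have coordE k : (k < n)%N -> nth_coord x k = (~~ odd k)%:R * nth_coord x 0.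
  elim/ltn_ind: k => -[|[|k]] IH kn; first by rewrite mul1r.
    by rewrite (coordS (Ordinal (ltnW kn))) mul0r.
  by rewrite (coordS (Ordinal (ltnW kn))) /= IH ?negbK // (ltn_trans _ kn).
by apply/matrixP=> i j; rewrite ord1 !mxE -nth_coord_ord coordE // mulrC.
Qed.

Lemma alt_even_neq0 : (0 < n)%N -> alt_even != 0.
Proof.
by move=> n0; apply/eqP=> /matrixP/(_ (Ordinal n0) 0); rewrite !mxE => /eqP; rewrite oner_eq0.
Qed.

End GramKernel.

Lemma sigmaSS_transvection n (i : 'I_n) :
  sigma n i.+2 = transvection (gram int n) (delta_mx i 0).
Proof.
apply/matrixP=> r c; rewrite transvectionE -colE !mxE /= !eqSS val_eqE eqxx andbT.
case: eqP => [->|_]; last by rewrite mul0r addr0.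
by rewrite mul1r (eq_sym i) (eq_sym (i : nat)) val_eqE addrA (addrC (c.+1 == i)%:R).
Qed.

Lemma sigma1_transvection n :
  ~~ odd n -> sigma n 1 = transvection (gram int n) (alt_odd int n).
Proof.
move=> evn; apply/matrixP=> r c; rewrite transvectionE gram_alt_odd // !mxE /=.
by rewrite negbK eqSS val_eqE; case: (odd r); rewrite ?mul1r ?mul0r ?addr0.
Qed.

Lemma gram_transvection_isometry (R : comUnitRingType) n (a : 'cV[R]_n) :
  preserves_form (gram R n) (transvection (gram R n) a) /\
  transvection (gram R n) a \in unitmx.
Proof.
split; first exact: transvection_preserves_form (tr_gram R n) _ (gram_isotropic a).
exact: transvection_unit (tr_gram R n) (gram_isotropic a).
Qed.

Lemma sigma_transvection n i : (1 <= i <= n)%N -> (i == 1%N -> ~~ odd n) ->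
  exists a, sigma n i = transvection (gram int n) a.
Proof.
case: i => [|[|k]] // /andP[_ kn] evn.
  by exists (alt_odd int n); apply: sigma1_transvection (evn isT).
by exists (delta_mx (Ordinal (ltnW kn)) 0); apply: (sigmaSS_transvection (Ordinal (ltnW kn))).
Qed.

Lemma in_Gn_preserves_form n (A : 'M[int]_n) g :
  (forall i, (1 <= i <= n)%N -> preserves_form A (sigma n i) /\ sigma n i \in unitmx) ->
  in_Gn g -> preserves_form A g.
Proof.
move=> Hsigma; elim=> [|i h hi _ IH|i h hi _ IH]; first exact: preserves_form1.
  by apply: preserves_formM IH; case: (Hsigma i hi).
by case: (Hsigma i hi) => Hp Hu; apply: preserves_formM IH; apply: preserves_formV.
Qed.

Lemma JForm_nondegenerate (R : comNzRingType) n (x : 'cV[R]_n) :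
  ~~ odd n -> (forall y, JForm x y = 0) -> x = 0.
Proof.
case: n x => [x _ _|m x evn /JForm_kernel Kx]; first by apply/matrixP=> -[].
have xE := gram_kernel Kx; move: Kx; rewrite xE => /matrixP/(_ ord_max 0).
rewrite -scalemxAr mxE [in X in _ = X]mxE gram_alt_even eqxx evn mulrN1.
by move/eqP; rewrite oppr_eq0 => /eqP->; rewrite scale0r.
Qed.

Lemma JForm_kernel_odd (R : comNzRingType) n (x : 'cV[R]_n) : odd n ->
  (forall y, JForm x y = 0) <-> exists c, x = c *: alt_even R n.
Proof.
move=> oddn; rewrite JForm_kernel; split=> [/gram_kernel xE|[c ->]].
  by exists (nth_coord x 0).
rewrite -scalemxAr; apply/matrixP=> i j.
by rewrite ord1 mxE gram_alt_even oddn andbF oppr0 mulr0 mxE.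
Qed.

Theorem mainTheorem3 (n : nat) (hn : (1 <= n)%N) :
  (~~ odd n ->
     (forall x : 'cV[rat]_n, (forall y : 'cV[rat]_n, JForm x y = 0) -> x = 0) /\
     (forall g : 'M[int]_n, in_Gn g ->
        forall x y : 'cV[int]_n, JForm (g *m x) (g *m y) = JForm x y)) /\
  (odd n ->
     (forall i : nat, (2 <= i <= n)%N ->
        forall x y : 'cV[int]_n,
          JForm (sigma n i *m x) (sigma n i *m y) = JForm x y) /\
     (exists v : 'cV[rat]_n, v != 0 /\
        forall x : 'cV[rat]_n,
          (forall y : 'cV[rat]_n, JForm x y = 0) <-> exists c : rat, x = c *: v)).
Proof.
have sigma_isometry i : (1 <= i <= n)%N -> (i == 1%N -> ~~ odd n) ->
    preserves_form (gram int n) (sigma n i) /\ sigma n i \in unitmx.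
  by move=> hi /(sigma_transvection hi)[a ->]; apply: gram_transvection_isometry.
split=> [evn | oddn]; split.
- by move=> x; apply: JForm_nondegenerate.
- move=> g Gg x y; apply/preserves_form_JForm/(in_Gn_preserves_form _ Gg) => i hi.
  by apply: sigma_isometry => // _.
- move=> i /andP[i2 iN] x y; apply: preserves_form_JForm.
  have iN1 : (1 <= i <= n)%N by rewrite (ltnW i2).
  by case: (sigma_isometry i iN1) => [/eqP i1 | //]; rewrite i1 in i2.
- by exists (alt_even rat n); split; [apply: alt_even_neq0 | move=> x; apply: JForm_kernel_odd].
Qed.
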